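(* With the notation of the context, for every sufficiently small $\varepsilon>0$ the following holds. For each $i\ge0$ there exists an open $C^\infty$ curve $\gamma_i$ properly embedded in the strip $[2i,2i+1]\times\mathbb R$ such that: (1) the $y$-component of the unit tangent vector of $\gamma_i$ is nonzero at every point and bounded below by a positive constant along the whole curve; (2) $\gamma_i$ contains all the points $p^i_l=(\Delta^l(c_i)+2i,\,l)$, $l\ge0$; (3) the curvature $\kappa_i$ of $\gamma_i$ satisfies $|\kappa_i(p)|<15$ for all $p\in\gamma_i$; (4) for all $l\ge0$, $\gamma_i$ coincides near $p^i_l$ with the vertical segment $\{(\Delta^l(c_i)+2i,y):y\in(l-\varepsilon,l+\varepsilon)\}$. In particular $\gamma_i$ has infinite length.
   Context: A Turing machine with alphabet $\{0,\dots,9\}$ ($0$ blank) and states $Q=\{1,\dots,m\}$ is fixed. Tapes have finitely many nonzero symbols, written $\dots00t_{-a}\dots t_b00\dots$; $s$ is the integer with decimal digits $t_{-a}\dots t_{-1}$ and $r$ the integer with decimal digits $t_b\dots t_0$; configurations $(q,t)$ are encoded as $\varphi(q,t)=\frac{1}{2^q3^r5^s}\in[0,1]$. $\Delta$ is the global one-step transition function on configurations, extended by $\Delta(q_{halt},t)=(q_{halt},t)$. The initial configurations (state $q_0$) are identified with their encodings and listed as $c_0>c_1>\cdots$; $\Delta^l(c_i)\in[0,1]$ denotes the encoding of the configuration after $l$ steps starting from $c_i$. *)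

From Stdlib Require Import Reals Lra Arith.
From Coquelicot Require Import Coquelicot.
Open Scope R_scope.

(** * Turing machines over the alphabet {0,...,9} (0 = blank), states {1..m} *)

Inductive move := MoveL | MoveR.

Record TM := {
  tm_m : nat;
  tm_q0 : nat;
  tm_qh : nat;
  tm_delta : nat -> nat -> nat * nat * move    (* (state, read symbol) |-> (new state, written symbol, head move) *)
}.

Definition TM_wf (M : TM) : Prop :=
  (1 <= tm_q0 M <= tm_m M)%nat /\ (1 <= tm_qh M <= tm_m M)%nat /\
  forall q a, (1 <= q <= tm_m M)%nat -> (a < 10)%nat ->
    let '(q', w, _) := tm_delta M q a in (1 <= q' <= tm_m M)%nat /\ (w < 10)%nat.

(** A configuration (q,t) is represented by (q, r, s), where the tape
    t = ... 0 0 t_{-a} ... t_b 0 0 ... (head on cell 0) is represented by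
    r = the integer with decimal digits t_b ... t_0  (so t_j = j-th digit of r, j >= 0)
    s = the integer with decimal digits t_{-a} ... t_{-1} (so t_{-j} = (j-1)-th digit of s).
    This is a bijection between finitely supported tapes and pairs (r,s). *)
Definition config := (nat * nat * nat)%type.

Definition step (M : TM) (c : config) : config :=
  let '(q, r, s) := c in
  if Nat.eqb q (tm_qh M) then c else
  let '(q', w, d) := tm_delta M q (r mod 10) in
  let r1 := (10 * (r / 10) + w)%nat in       (* tape after writing w on cell 0 *)
  match d with
  | MoveR => (q', (r1 / 10)%nat, (10 * s + w)%nat)
  | MoveL => (q', (10 * r1 + s mod 10)%nat, (s / 10)%nat)
  end.

Definition enc (c : config) : R :=
  let '(q, r, s) := c in / (2 ^ q * 3 ^ r * 5 ^ s).

Definition Delta_iter (M : TM) (l : nat) (c : config) : config :=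
  Nat.iter l (step M) c.

Definition init_cfg (M : TM) (rs : nat * nat) : config :=
  (tm_q0 M, fst rs, snd rs).

Definition init_enum (M : TM) (c : nat -> nat * nat) : Prop :=
  (forall i, enc (init_cfg M (c (S i))) < enc (init_cfg M (c i))) /\
  (forall r s, exists i, c i = (r, s)).

Definition smooth (f : R -> R) : Prop := forall n t, ex_derive_n f n t.

(** A properly embedded open C^infinity curve: smooth regular injective
    parametrization of R which is a proper map (preimages of bounded sets
    are bounded, i.e. |gamma(t)| -> infinity as |t| -> infinity). *)
Definition properly_embedded_curve (gx gy : R -> R) : Prop :=
  smooth gx /\ smooth gy /\
  (forall t, Derive gx t <> 0 \/ Derive gy t <> 0) /\
  (forall t1 t2, gx t1 = gx t2 -> gy t1 = gy t2 -> t1 = t2) /\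
  (forall B, exists T, forall t, T < Rabs t -> B < sqrt (gx t ^ 2 + gy t ^ 2)).

Definition speed (gx gy : R -> R) (t : R) : R :=
  sqrt (Derive gx t ^ 2 + Derive gy t ^ 2).

Definition unit_tangent_y (gx gy : R -> R) (t : R) : R :=
  Derive gy t / speed gx gy t.

Definition curvature (gx gy : R -> R) (t : R) : R :=
  (Derive gx t * Derive_n gy 2 t - Derive gy t * Derive_n gx 2 t) / (speed gx gy t ^ 3).

From Stdlib Require Import Reals Lra Lia ZArith.
From Coquelicot Require Import Coquelicot.
Open Scope R_scope.

(* Take for [gamma_i] the graph [x = g(y)] over the y-axis of a smoothed staircase [g]:
   [g] equals [x_l = Delta^l(c_i) + 2i] for [y] within 1/20 of [l] and passes from [x_l] to
   [x_(l+1)] on [l + 1/20 <= y <= l + 19/20] through the rescaled smooth step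
   [phi(s) = psi(s) / (psi(s) + psi(1-s))], [psi(s) = exp(-1/s)].  Every state is [>= 1], so
   [0 < x_l - 2i <= 1/2]; hence [|g^(k)| <= 1/2 (10/9)^k sup |phi^(k)|], and [sup |phi'|],
   [sup |phi''| <= 23] give [|g'| <= 13] and [|g''| < 15].  For a graph over the y-axis the
   curvature is at most [|g''|] and the vertical tangent component at least [1/(1 + sup |g'|)].
   The estimate [|phi''| <= 23] comes down, via [e^z >= 1 + z + ... + z^5/5!], to the
   positivity of a degree-10 polynomial whose Bernstein coefficients are positive. *)

Definition Cn (n : nat) (f : R -> R) : Prop :=
  forall k x, (k <= n)%nat -> ex_derive_n f k x.

Lemma Derive_n_S f k x : Derive_n f (S k) x = Derive_n (Derive f) k x.
Proof. rewrite <- Nat.add_1_r, <- (Derive_n_comp f k 1). reflexivity. Qed.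

Lemma ex_derive_n_SS f k x :
  ex_derive_n f (S (S k)) x <-> ex_derive_n (Derive f) (S k) x.
Proof.
  change (ex_derive (Derive_n f (S k)) x <-> ex_derive (Derive_n (Derive f) k) x).
  split; apply ex_derive_ext; intro t; rewrite Derive_n_S; reflexivity.
Qed.

Lemma Cn_S_iff n f :
  Cn (S n) f <-> (forall x, ex_derive f x) /\ Cn n (Derive f).
Proof.
  split.
  - intros Hf; split; [intro x; exact (Hf 1%nat x ltac:(lia))|].
    intros [|k] x Hk; [exact I|]. apply (ex_derive_n_SS f k x), Hf. lia.
  - intros [Hd Hf] [|[|k]] x Hk; [exact I | apply Hd |].
    apply (ex_derive_n_SS f k x), Hf. lia.
Qed.

Lemma Cn_0 f : Cn 0 f.
Proof. intros [|k] x Hk; [exact I | lia]. Qed.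

Lemma Cn_ext n f g : (forall x, f x = g x) -> Cn n f -> Cn n g.
Proof. intros E Hf k x Hk. apply ex_derive_n_ext with f; auto. Qed.

Lemma Cn_of_Cn_S n f : Cn (S n) f -> Cn n f.
Proof. intros Hf k x Hk. apply Hf. lia. Qed.

Lemma Cn_loc n f :
  (forall x, exists g, Cn n g /\ locally x (fun t => g t = f t)) -> Cn n f.
Proof.
  intros H k x Hk. destruct (H x) as [g [Hg Hloc]].
  apply ex_derive_n_ext_loc with g; auto.
Qed.

Lemma Cn_const n c : Cn n (fun _ => c).
Proof. intros k x _. apply ex_derive_n_const. Qed.

Lemma Cn_id n : Cn n (fun x => x).
Proof.
  induction n as [|n _]; [apply Cn_0|]. apply Cn_S_iff. split.
  - intro x. apply ex_derive_id.
  - apply Cn_ext with (fun _ => 1); [intro x; symmetry; apply Derive_id | apply Cn_const].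
Qed.

Lemma Cn_plus n f g : Cn n f -> Cn n g -> Cn n (fun x => f x + g x).
Proof.
  revert f g. induction n as [|n IH]; intros f g Hf Hg; [apply Cn_0|].
  apply Cn_S_iff in Hf as [Df Hf], Hg as [Dg Hg]. apply Cn_S_iff. split.
  - intro x. apply (ex_derive_plus f g); auto.
  - apply Cn_ext with (fun x => Derive f x + Derive g x); auto.
    intro x. symmetry. apply Derive_plus; auto.
Qed.

Lemma Cn_mult n f g : Cn n f -> Cn n g -> Cn n (fun x => f x * g x).
Proof.
  revert f g. induction n as [|n IH]; intros f g Hf Hg; [apply Cn_0|].
  pose proof (Cn_of_Cn_S n f Hf) as Hf0.
  pose proof (Cn_of_Cn_S n g Hg) as Hg0.
  apply Cn_S_iff in Hf as [Df Hf], Hg as [Dg Hg]. apply Cn_S_iff. split.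
  - intro x. apply ex_derive_mult; auto.
  - apply Cn_ext with (fun x => Derive f x * g x + f x * Derive g x).
    + intro x. symmetry. apply Derive_mult; auto.
    + apply Cn_plus; auto.
Qed.

Lemma Cn_inv n g : (forall x, g x <> 0) -> Cn n g -> Cn n (fun x => / g x).
Proof.
  intro Hnz. revert g Hnz. induction n as [|n IH]; intros g Hnz Hg; [apply Cn_0|].
  pose proof (Cn_of_Cn_S n g Hg) as Hg0.
  apply Cn_S_iff in Hg as [Dg Hg]. apply Cn_S_iff. split.
  - intro x. apply ex_derive_inv; auto.
  - apply Cn_ext with (fun x => (-1) * Derive g x * (/ g x * / g x)).
    + intro x. rewrite Derive_inv; auto. field. auto.
    + apply Cn_mult; [apply Cn_mult; auto; apply Cn_const | apply Cn_mult; auto].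
Qed.

Lemma Cn_comp n f g : Cn n f -> Cn n g -> Cn n (fun x => f (g x)).
Proof.
  revert f g. induction n as [|n IH]; intros f g Hf Hg; [apply Cn_0|].
  pose proof (Cn_of_Cn_S n f Hf) as Hf0.
  pose proof (Cn_of_Cn_S n g Hg) as Hg0.
  apply Cn_S_iff in Hf as [Df Hf], Hg as [Dg Hg]. apply Cn_S_iff. split.
  - intro x. apply (ex_derive_comp f g x); auto.
  - apply Cn_ext with (fun x => Derive g x * Derive f (g x)).
    + intro x. symmetry. apply Derive_comp; auto.
    + apply Cn_mult; auto.
Qed.

Lemma Cn_affine n a b : Cn n (fun x => a * x + b).
Proof. apply Cn_plus; [apply Cn_mult; [apply Cn_const | apply Cn_id] | apply Cn_const]. Qed.

(** * The flat function exp(-1/x) *)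

(* Closed under differentiation on [x > 0]; contains the coefficients of all derivatives
   of [exp (-1/x)]. *)
Inductive poly_inv : (R -> R) -> Prop :=
| poly_inv_const c : poly_inv (fun _ => c)
| poly_inv_Rinv : poly_inv (fun x => / x)
| poly_inv_plus f g : poly_inv f -> poly_inv g -> poly_inv (fun x => f x + g x)
| poly_inv_mult f g : poly_inv f -> poly_inv g -> poly_inv (fun x => f x * g x).

Lemma poly_inv_derive P :
  poly_inv P -> exists Q, poly_inv Q /\ forall x, 0 < x -> is_derive P x (Q x).
Proof.
  induction 1 as [c| |f g _ [Qf [Hf Df]] _ [Qg [Hg Dg]]|f g Pf [Qf [Hf Df]] Pg [Qg [Hg Dg]]].
  - exists (fun _ => 0). split; [constructor|]. intros x _. auto_derive; auto.
  - exists (fun x => (-1) * (/ x * / x)). split; [repeat constructor|].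
    intros x Hx. auto_derive; [lra | field; lra].
  - exists (fun x => Qf x + Qg x). split; [constructor; auto|].
    intros x Hx. apply (is_derive_plus f g); auto.
  - exists (fun x => Qf x * g x + f x * Qg x). split; [repeat constructor; auto|].
    intros x Hx. apply (is_derive_mult f g); auto. intros; apply Rmult_comm.
Qed.

Lemma poly_inv_bound P :
  poly_inv P -> exists C k, 0 <= C /\ forall x, 0 < x <= 1 -> Rabs (P x) <= C * (/ x) ^ k.
Proof.
  assert (Hge : forall x, 0 < x <= 1 -> 1 <= / x).
  { intros x Hx. rewrite <- Rinv_1. apply Rinv_le_contravar; lra. }
  induction 1 as [c| |f g _ [C1 [k1 [P1 H1]]] _ [C2 [k2 [P2 H2]]]
                 |f g _ [C1 [k1 [P1 H1]]] _ [C2 [k2 [P2 H2]]]].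
  - exists (Rabs c), 0%nat. split; [apply Rabs_pos|]. intros. simpl. lra.
  - exists 1, 1%nat. split; [lra|]. intros x Hx. specialize (Hge x Hx).
    simpl. rewrite Rabs_right; lra.
  - exists (C1 + C2), (k1 + k2)%nat. split; [lra|]. intros x Hx.
    specialize (H1 x Hx). specialize (H2 x Hx). specialize (Hge x Hx).
    assert ((/ x) ^ k1 <= (/ x) ^ (k1 + k2)) by (apply Rle_pow; [lra | lia]).
    assert ((/ x) ^ k2 <= (/ x) ^ (k1 + k2)) by (apply Rle_pow; [lra | lia]).
    eapply Rle_trans; [apply Rabs_triang|]. nra.
  - exists (C1 * C2), (k1 + k2)%nat. split; [nra|]. intros x Hx.
    rewrite Rabs_mult, pow_add.
    replace (C1 * C2 * ((/ x) ^ k1 * (/ x) ^ k2))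
      with ((C1 * (/ x) ^ k1) * (C2 * (/ x) ^ k2)) by ring.
    apply Rmult_le_compat; auto using Rabs_pos.
Qed.

Lemma exp_ge_pow_div_fact x n : 0 <= x -> x ^ n / INR (fact n) <= exp x.
Proof.
  intros Hx. eapply Rle_trans; [|apply (exp_ge_taylor x n Hx)].
  destruct n as [|n]; [simpl; lra|]. rewrite tech5.
  enough (0 <= sum_f_R0 (fun k => x ^ k / INR (fact k)) n) by lra.
  apply cond_pos_sum. intro k.
  apply Rle_mult_inv_pos; [apply pow_le; auto | apply lt_0_INR, lt_O_fact].
Qed.

Lemma exp_neg_inv_le x n : 0 < x -> exp (- / x) <= INR (fact n) * x ^ n.
Proof.
  intros Hx. assert (Hf : 0 < INR (fact n)) by apply lt_0_INR, lt_O_fact.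
  assert (Hxn : 0 < x ^ n) by (apply pow_lt; lra).
  pose proof (exp_ge_pow_div_fact (/ x) n (Rlt_le _ _ (Rinv_0_lt_compat _ Hx))) as He.
  rewrite pow_inv in He. rewrite exp_Ropp.
  replace (INR (fact n) * x ^ n) with (/ (/ x ^ n / INR (fact n))) by (field; lra).
  apply Rinv_le_contravar; auto.
  apply Rdiv_lt_0_compat; auto. apply Rinv_0_lt_compat; auto.
Qed.

Definition flat (P : R -> R) (x : R) : R :=
  if Rlt_dec 0 x then P x * exp (- / x) else 0.

Lemma flat_quotient_le P :
  poly_inv P -> exists K, 0 <= K /\
  forall h, 0 < h <= 1 -> Rabs (P h * exp (- / h) / h) <= K * h.
Proof.
  intros HP. destruct (poly_inv_bound P HP) as [C [k [HC Hb]]].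
  exists (C * INR (fact (k + 2))). split.
  { apply Rmult_le_pos; [auto | apply pos_INR]. }
  intros h Hh. specialize (Hb h Hh).
  pose proof (exp_neg_inv_le h (k + 2) (proj1 Hh)) as He.
  assert (Hhk : 0 < h ^ k) by (apply pow_lt; lra).
  rewrite pow_inv in Hb. rewrite pow_add in He.
  unfold Rdiv. rewrite !Rabs_mult, (Rabs_right (exp _)), (Rabs_right (/ h))
    by (apply Rle_ge; try apply Rlt_le, Rinv_0_lt_compat; try apply Rlt_le, exp_pos; lra).
  apply Rle_trans with (C * / h ^ k * (INR (fact (k + 2)) * (h ^ k * h ^ 2)) * / h).
  - apply Rmult_le_compat_r; [apply Rlt_le, Rinv_0_lt_compat; lra|].
    apply Rmult_le_compat; auto using Rabs_pos; apply Rlt_le, exp_pos.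
  - right. field. lra.
Qed.

Lemma flat_derive_0 P : poly_inv P -> is_derive (flat P) 0 0.
Proof.
  intros HP. destruct (flat_quotient_le P HP) as [K [HK Hq]].
  apply is_derive_Reals. intros eps Heps.
  assert (Hd : 0 < Rmin 1 (eps / (K + 1))) by (apply Rmin_pos; [lra | apply Rdiv_lt_0_compat; lra]).
  exists (mkposreal _ Hd). intros h Hh0 Hh. simpl in Hh.
  pose proof (Rmin_l 1 (eps / (K + 1))). pose proof (Rmin_r 1 (eps / (K + 1))).
  unfold flat. rewrite Rplus_0_l. destruct (Rlt_dec 0 0) as [F|_]; [lra|].
  destruct (Rlt_dec 0 h) as [Hp|Hn].
  - rewrite Rabs_right in Hh by lra.
    replace ((P h * exp (- / h) - 0) / h - 0) with (P h * exp (- / h) / h) by (field; lra).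
    eapply Rle_lt_trans; [apply Hq; lra|].
    assert (h * (K + 1) < eps).
    { apply Rmult_lt_reg_r with (/ (K + 1)); [apply Rinv_0_lt_compat; lra|].
      replace (h * (K + 1) * / (K + 1)) with h by (field; lra). unfold Rdiv in *. lra. }
    nra.
  - replace ((0 - 0) / h - 0) with 0 by (field; lra). rewrite Rabs_R0. auto.
Qed.

Lemma flat_derive P :
  poly_inv P -> exists Q, poly_inv Q /\ forall x, is_derive (flat P) x (flat Q x).
Proof.
  intros HP. destruct (poly_inv_derive P HP) as [Q [HQ DP]].
  exists (fun x => Q x + P x * (/ x * / x)). split; [repeat constructor; auto|].
  intro x. destruct (Rtotal_order x 0) as [Hn|[->|Hp]].
  - apply is_derive_ext_loc with (fun _ => 0).
    + apply (filter_imp (fun t => t < 0)); [|exact (open_lt 0 x Hn)].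
      intros t Ht. unfold flat. destruct (Rlt_dec 0 t); [lra | reflexivity].
    + unfold flat. destruct (Rlt_dec 0 x); [lra|]. auto_derive; auto.
  - unfold flat at 2. destruct (Rlt_dec 0 0); [lra|]. apply flat_derive_0; auto.
  - apply is_derive_ext_loc with (fun t => P t * exp (- / t)).
    + apply (filter_imp (fun t => 0 < t)); [|exact (open_gt 0 x Hp)].
      intros t Ht. unfold flat. destruct (Rlt_dec 0 t); [reflexivity | lra].
    + unfold flat. destruct (Rlt_dec 0 x); [|lra].
      replace ((Q x + P x * (/ x * / x)) * exp (- / x))
        with (Q x * exp (- / x) + P x * (exp (- / x) * (/ x * / x))) by ring.
      apply (is_derive_mult P (fun t => exp (- / t))); [auto | | intros; apply Rmult_comm].
      auto_derive; [lra | field; lra].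
Qed.

Lemma flat_Cn n P : poly_inv P -> Cn n (flat P).
Proof.
  revert P. induction n as [|n IH]; intros P HP; [apply Cn_0|].
  destruct (flat_derive P HP) as [Q [HQ DP]]. apply Cn_S_iff. split.
  - intro x. eexists. apply DP.
  - apply Cn_ext with (flat Q); [|auto]. intro x. symmetry. apply is_derive_unique, DP.
Qed.

Definition psi : R -> R := flat (fun _ => 1).

Lemma psi_Cn n : Cn n psi.
Proof. apply flat_Cn. constructor. Qed.

Lemma psi_pos x : 0 < x -> psi x = exp (- / x).
Proof. intros Hx. unfold psi, flat. destruct (Rlt_dec 0 x); [ring | lra]. Qed.

Lemma psi_npos x : x <= 0 -> psi x = 0.
Proof. intros Hx. unfold psi, flat. destruct (Rlt_dec 0 x); [lra | reflexivity]. Qed.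

Lemma psi_ge0 x : 0 <= psi x.
Proof.
  destruct (Rle_lt_dec x 0); [rewrite psi_npos; lra|].
  rewrite psi_pos; auto. apply Rlt_le, exp_pos.
Qed.

Lemma psi_sum_pos s : 0 < psi s + psi (1 - s).
Proof.
  pose proof (psi_ge0 s). pose proof (psi_ge0 (1 - s)).
  destruct (Rle_lt_dec s 0).
  - rewrite (psi_pos (1 - s)) by lra. pose proof (exp_pos (- / (1 - s))). lra.
  - rewrite (psi_pos s) by lra. pose proof (exp_pos (- / s)). lra.
Qed.

Definition smooth_step (s : R) : R := psi s / (psi s + psi (1 - s)).

Lemma smooth_step_Cn n : Cn n smooth_step.
Proof.
  apply Cn_mult; [apply psi_Cn|]. apply Cn_inv.
  - intro x. pose proof (psi_sum_pos x). lra.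
  - apply Cn_plus; [apply psi_Cn|]. apply Cn_comp; [apply psi_Cn|].
    apply Cn_ext with (fun x => (-1) * x + 1); [intro; ring | apply Cn_affine].
Qed.

Lemma smooth_step_ex_derive x : ex_derive smooth_step x.
Proof. exact (smooth_step_Cn 1%nat 1%nat x (le_n 1)). Qed.

Lemma smooth_step_ex_derive2 x : ex_derive (Derive smooth_step) x.
Proof. exact (smooth_step_Cn 2%nat 2%nat x (le_n 2)). Qed.

Lemma smooth_step_le0 s : s <= 0 -> smooth_step s = 0.
Proof. intros Hs. unfold smooth_step. rewrite psi_npos by auto. unfold Rdiv. ring. Qed.

Lemma smooth_step_ge1 s : 1 <= s -> smooth_step s = 1.
Proof.
  intros Hs. unfold smooth_step. rewrite (psi_npos (1 - s)), psi_pos by lra.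
  pose proof (exp_pos (- / s)). field. lra.
Qed.

Lemma smooth_step_range s : 0 <= smooth_step s <= 1.
Proof.
  unfold smooth_step. pose proof (psi_sum_pos s). pose proof (psi_ge0 s).
  pose proof (psi_ge0 (1 - s)). split.
  - apply Rle_mult_inv_pos; auto.
  - apply Rmult_le_reg_r with (psi s + psi (1 - s)); auto.
    unfold Rdiv. rewrite Rmult_assoc, Rinv_l; lra.
Qed.

Definition step_weight (s : R) : R :=
  exp (- / s) * exp (- / (1 - s)) / (exp (- / s) + exp (- / (1 - s))) ^ 2.

Definition step_rate (s : R) : R := / s ^ 2 + / (1 - s) ^ 2.

Definition step_skew (s : R) : R :=
  (exp (- / (1 - s)) - exp (- / s)) / (exp (- / s) + exp (- / (1 - s))).

Lemma smooth_step_derive_in s :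
  0 < s < 1 -> is_derive smooth_step s (step_weight s * step_rate s).
Proof.
  intros Hs.
  apply is_derive_ext_loc with (fun s => exp (- / s) / (exp (- / s) + exp (- / (1 - s)))).
  - apply (filter_imp (fun t => 0 < t /\ t < 1)).
    + intros t Ht. unfold smooth_step. rewrite !psi_pos by lra. reflexivity.
    + apply (open_and _ _ (open_gt 0) (open_lt 1)). lra.
  - unfold step_weight, step_rate.
    pose proof (exp_pos (- / s)). pose proof (exp_pos (- / (1 - s))).
    auto_derive; replace (1 + - s) with (1 - s) by ring; [repeat split; lra|].
    field. repeat split; lra.
Qed.

Lemma smooth_step_derive2_in s : 0 < s < 1 ->
  Derive_n smooth_step 2 s =
  step_weight s * (step_rate s ^ 2 * step_skew s + 2 / (1 - s) ^ 3 - 2 / s ^ 3).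
Proof.
  intros Hs. change (Derive_n smooth_step 2 s) with (Derive (Derive smooth_step) s).
  rewrite (Derive_ext_loc _ (fun s => step_weight s * step_rate s) s).
  - apply is_derive_unique. unfold step_weight, step_rate, step_skew.
    pose proof (exp_pos (- / s)). pose proof (exp_pos (- / (1 - s))).
    auto_derive; replace (1 + - s) with (1 - s) by ring; [repeat split; try lra; nra|].
    field. repeat split; lra.
  - apply (filter_imp (fun t => 0 < t /\ t < 1)).
    + intros t Ht. apply is_derive_unique, smooth_step_derive_in; lra.
    + apply (open_and _ _ (open_gt 0) (open_lt 1)). lra.
Qed.

(** * Bounds on the derivatives of the smooth step *)

(* Bernstein form on [0, 1]: all coefficients are positive. *)
Definition key_poly (r : R) : R :=
  5/1024 * (1 - r) ^ 10 + 71/512 * r * (1 - r) ^ 9 + 207/256 * r ^ 2 * (1 - r) ^ 8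
  + 373/192 * r ^ 3 * (1 - r) ^ 7 + 775/384 * r ^ 4 * (1 - r) ^ 6
  + 193/320 * r ^ 5 * (1 - r) ^ 5 + 13/48 * r ^ 6 * (1 - r) ^ 4
  + 73/48 * r ^ 7 * (1 - r) ^ 3 + 57/32 * r ^ 8 * (1 - r) ^ 2
  + 15/16 * r ^ 9 * (1 - r) + 23/120 * r ^ 10.

Lemma key_poly_nonneg r : 0 <= r <= 1 -> 0 <= key_poly r.
Proof.
  intros Hr. unfold key_poly.
  repeat first [lra | apply Rplus_le_le_0_compat | apply Rmult_le_pos | apply pow_le].
Qed.

(* [e^z >= 1 + z + ... + z^5/5!] with [z = 1/s - 1/(1-s)] turns the claim into
   [key_poly (1 - 2 s) >= 0]. *)
Lemma step_rate_sq_le_half s :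
  0 < s <= 1/2 -> step_rate s ^ 2 <= 23 * (2 + exp (/ s - / (1 - s))).
Proof.
  intros Hs. set (z := / s - / (1 - s)).
  assert (Hz : 0 <= z).
  { unfold z. enough (/ (1 - s) <= / s) by lra. apply Rinv_le_contravar; lra. }
  pose proof (exp_ge_taylor z 5 Hz) as Hexp. simpl in Hexp.
  assert (Hid : 23 * (2 + (1 + z + z ^ 2 / 2 + z ^ 3 / 6 + z ^ 4 / 24 + z ^ 5 / 120))
                - step_rate s ^ 2 = key_poly (1 - 2 * s) / (s * (1 - s)) ^ 5).
  { unfold z, step_rate, key_poly. field. lra. }
  assert (0 <= key_poly (1 - 2 * s) / (s * (1 - s)) ^ 5).
  { apply Rle_mult_inv_pos; [apply key_poly_nonneg; lra | apply pow_lt; nra]. }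
  nra.
Qed.

Lemma step_weight_exp s : 0 < s < 1 ->
  step_weight s = exp (/ s - / (1 - s)) / (1 + exp (/ s - / (1 - s))) ^ 2.
Proof.
  intros Hs. unfold step_weight.
  replace (exp (- / (1 - s))) with (exp (- / s) * exp (/ s - / (1 - s)))
    by (rewrite <- exp_plus; f_equal; ring).
  pose proof (exp_pos (- / s)). pose proof (exp_pos (/ s - / (1 - s))).
  field. repeat split; nra.
Qed.

Lemma step_weight_sym s : step_weight (1 - s) = step_weight s.
Proof.
  unfold step_weight. replace (1 - (1 - s)) with s by ring.
  now rewrite (Rplus_comm (exp (- / (1 - s)))), (Rmult_comm (exp (- / (1 - s)))).
Qed.

Lemma step_rate_sym s : step_rate (1 - s) = step_rate s.
Proof. unfold step_rate. replace (1 - (1 - s)) with s by ring. ring. Qed.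

Lemma step_weight_nonneg s : 0 <= step_weight s.
Proof.
  unfold step_weight. pose proof (exp_pos (- / s)). pose proof (exp_pos (- / (1 - s))).
  apply Rle_mult_inv_pos; [nra | apply pow_lt; lra].
Qed.

Lemma step_weight_rate_sq_le s : 0 < s < 1 -> step_weight s * step_rate s ^ 2 <= 23.
Proof.
  assert (Hhalf : forall s, 0 < s <= 1/2 -> step_weight s * step_rate s ^ 2 <= 23).
  { intros u Hu. rewrite step_weight_exp by lra.
    pose proof (step_rate_sq_le_half u Hu) as HA.
    set (E := exp (/ u - / (1 - u))) in *. assert (HE : 0 < E) by apply exp_pos.
    assert (Hw : E / (1 + E) ^ 2 <= / (2 + E)).
    { apply Rmult_le_reg_r with ((1 + E) ^ 2 * (2 + E)); [nra|].
      field_simplify; [nra | lra | lra]. }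
    apply Rle_trans with (/ (2 + E) * step_rate u ^ 2).
    - apply Rmult_le_compat_r; [apply pow2_ge_0 | exact Hw].
    - apply Rmult_le_reg_l with (2 + E); [lra|].
      rewrite <- Rmult_assoc, Rinv_r by lra. lra. }
  intros Hs. destruct (Rle_lt_dec s (1/2)); [apply Hhalf; lra|].
  rewrite <- step_weight_sym, <- step_rate_sym. apply Hhalf. lra.
Qed.

Lemma skew_term_le a b t :
  1 <= a -> 1 <= b -> -1 <= t <= 1 -> (b <= a -> 0 <= t) -> (a <= b -> t <= 0) ->
  Rabs ((a ^ 2 + b ^ 2) ^ 2 * t + 2 * b ^ 3 - 2 * a ^ 3) <= (a ^ 2 + b ^ 2) ^ 2.
Proof.
  intros Ha Hb Ht Hpos Hneg.
  assert (Ka : 2 * a ^ 3 <= (a ^ 2 + b ^ 2) ^ 2).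
  { assert (0 <= a ^ 2 * (b ^ 2 - 1)) by (apply Rmult_le_pos; nra).
    assert (0 <= a ^ 2 * ((a - 1) ^ 2 + 1)) by (apply Rmult_le_pos; nra). nra. }
  assert (Kb : 2 * b ^ 3 <= (a ^ 2 + b ^ 2) ^ 2).
  { assert (0 <= b ^ 2 * (a ^ 2 - 1)) by (apply Rmult_le_pos; nra).
    assert (0 <= b ^ 2 * ((b - 1) ^ 2 + 1)) by (apply Rmult_le_pos; nra). nra. }
  apply Rabs_le. destruct (Rle_lt_dec b a) as [Hba|Hab].
  - assert (b ^ 3 <= a ^ 3) by (apply pow_incr; lra).
    assert (0 <= b ^ 3) by (apply pow_le; lra). specialize (Hpos Hba). nra.
  - assert (a ^ 3 <= b ^ 3) by (apply pow_incr; lra).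
    assert (0 <= a ^ 3) by (apply pow_le; lra). specialize (Hneg (Rlt_le _ _ Hab)). nra.
Qed.

Lemma step_skew_range s : 0 < s < 1 ->
  -1 <= step_skew s <= 1 /\
  (/ (1 - s) <= / s -> 0 <= step_skew s) /\ (/ s <= / (1 - s) -> step_skew s <= 0).
Proof.
  intros Hs. unfold step_skew.
  pose proof (exp_pos (- / s)) as P1. pose proof (exp_pos (- / (1 - s))) as P2.
  assert (Hmono : forall x y, x <= y -> exp x <= exp y).
  { intros x y [Hxy | ->]; [apply Rlt_le, exp_increasing | right]; auto. }
  assert (Hden : 0 < / (exp (- / s) + exp (- / (1 - s)))) by (apply Rinv_0_lt_compat; lra).
  repeat split; intros; unfold Rdiv.
  - apply Rmult_le_reg_r with (exp (- / s) + exp (- / (1 - s))); [lra|].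
    rewrite Rmult_assoc, Rinv_l; lra.
  - apply Rmult_le_reg_r with (exp (- / s) + exp (- / (1 - s))); [lra|].
    rewrite Rmult_assoc, Rinv_l; lra.
  - apply Rmult_le_pos; [|lra].
    enough (exp (- / s) <= exp (- / (1 - s))) by lra.
    apply Hmono, Ropp_le_contravar; assumption.
  - apply Rmult_le_0_r; [|lra].
    enough (exp (- / (1 - s)) <= exp (- / s)) by lra.
    apply Hmono, Ropp_le_contravar; assumption.
Qed.

Lemma smooth_step_derive_bounds_in s : 0 < s < 1 ->
  Rabs (Derive smooth_step s) <= 23 /\ Rabs (Derive_n smooth_step 2 s) <= 23.
Proof.
  intros Hs. pose proof (step_weight_rate_sq_le s Hs) as Hw.
  pose proof (step_weight_nonneg s) as Hw0.
  assert (Ha : 1 <= / s) by (rewrite <- Rinv_1; apply Rinv_le_contravar; lra).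
  assert (Hb : 1 <= / (1 - s)) by (rewrite <- Rinv_1; apply Rinv_le_contravar; lra).
  assert (HA : step_rate s = (/ s) ^ 2 + (/ (1 - s)) ^ 2)
    by (unfold step_rate; rewrite !pow_inv; reflexivity).
  split.
  - rewrite (is_derive_unique _ _ _ (smooth_step_derive_in s Hs)).
    assert (1 <= step_rate s) by nra.
    rewrite Rabs_right by (apply Rle_ge, Rmult_le_pos; lra). nra.
  - rewrite smooth_step_derive2_in, Rabs_mult, (Rabs_right (step_weight s)) by (auto; lra).
    apply Rle_trans with (step_weight s * step_rate s ^ 2); [|exact Hw].
    apply Rmult_le_compat_l; [exact Hw0|].
    destruct (step_skew_range s Hs) as [Ht [Hpos Hneg]].
    replace (2 / (1 - s) ^ 3) with (2 * (/ (1 - s)) ^ 3) by (rewrite pow_inv; reflexivity).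
    replace (2 / s ^ 3) with (2 * (/ s) ^ 3) by (rewrite pow_inv; reflexivity).
    rewrite HA. apply skew_term_le; auto.
Qed.

Lemma Rabs_le_continuity_pt f x B :
  continuity_pt f x -> locally' x (fun y => Rabs (f y) <= B) -> Rabs (f x) <= B.
Proof.
  intros Hc Hb. destruct (Rle_lt_dec (Rabs (f x)) B) as [|Hlt]; [assumption|exfalso].
  assert (Heps : 0 < Rabs (f x) - B) by lra.
  pose proof (proj1 (continuity_pt_locally' f x) Hc (mkposreal _ Heps)) as Hnear.
  set (P y := Rabs (f y) <= B /\ Rabs (f y - f x) < Rabs (f x) - B).
  assert (Hright : at_right x P).
  { unfold at_right, within. apply (filter_imp (fun y => y <> x -> P y)).
    - intros y H Hxy. apply H. lra.
    - exact (filter_and _ _ Hb Hnear). }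
  destruct (filter_ex _ Hright) as [y [Hy1 Hy2]].
  pose proof (Rabs_triang_inv (f x) (f y)). rewrite Rabs_minus_sym in Hy2. lra.
Qed.

Lemma smooth_step_derive_out s :
  s < 0 \/ 1 < s -> Derive smooth_step s = 0 /\ Derive_n smooth_step 2 s = 0.
Proof.
  intros Hs. assert (Hc : exists c, locally s (fun t => c = smooth_step t)).
  { destruct Hs as [Hs | Hs].
    - exists 0. apply (filter_imp (fun t => t < 0)); [|exact (open_lt 0 s Hs)].
      intros t Ht. rewrite smooth_step_le0; lra.
    - exists 1. apply (filter_imp (fun t => 1 < t)); [|exact (open_gt 1 s Hs)].
      intros t Ht. rewrite smooth_step_ge1; lra. }
  destruct Hc as [c Hc]. split.
  - change (Derive_n smooth_step 1 s = 0).
    rewrite <- (Derive_n_ext_loc _ _ 1 s Hc). apply Derive_n_const.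
  - rewrite <- (Derive_n_ext_loc _ _ 2 s Hc). apply Derive_n_const.
Qed.

Lemma smooth_step_derive_bounds s :
  Rabs (Derive smooth_step s) <= 23 /\ Rabs (Derive_n smooth_step 2 s) <= 23.
Proof.
  assert (Hoff : forall y, y <> 0 -> y <> 1 ->
            Rabs (Derive smooth_step y) <= 23 /\ Rabs (Derive_n smooth_step 2 y) <= 23).
  { intros y H0 H1. destruct (Rlt_or_le y 0) as [Hn|Hy0].
    - destruct (smooth_step_derive_out y (or_introl Hn)) as [-> ->].
      rewrite Rabs_R0. lra.
    - destruct (Rlt_or_le y 1) as [Hy1|Hy1].
      + apply smooth_step_derive_bounds_in. lra.
      + assert (1 < y) by (destruct Hy1; [auto | congruence]).
        destruct (smooth_step_derive_out y (or_intror H)) as [-> ->].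
        rewrite Rabs_R0. lra. }
  assert (Hnear : forall x, x = 0 \/ x = 1 ->
            locally' x (fun y => Rabs (Derive smooth_step y) <= 23 /\
                                 Rabs (Derive_n smooth_step 2 y) <= 23)).
  { intros x Hx. assert (Hd : 0 < 1/2) by lra. exists (mkposreal _ Hd).
    intros y Hy Hyx. change (Rabs (y - x) < 1/2) in Hy. apply Rabs_lt_between' in Hy.
    apply Hoff; destruct Hx; subst; lra. }
  assert (Hsing : s = 0 \/ s = 1 ->
            Rabs (Derive smooth_step s) <= 23 /\ Rabs (Derive_n smooth_step 2 s) <= 23).
  { intros Hs. pose proof (Hnear s Hs) as Hn. split; apply Rabs_le_continuity_pt.
    - apply derivable_continuous_pt, ex_derive_Reals_0, smooth_step_ex_derive2.
    - apply (filter_imp _ _ (fun y (Hy : _ /\ _) => proj1 Hy) Hn).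
    - apply derivable_continuous_pt, ex_derive_Reals_0, (smooth_step_Cn 3%nat 3%nat s (le_n 3)).
    - apply (filter_imp _ _ (fun y (Hy : _ /\ _) => proj2 Hy) Hn). }
  destruct (Req_dec s 0) as [H0|H0]; [apply Hsing; auto|].
  destruct (Req_dec s 1) as [H1|H1]; [apply Hsing; auto | apply Hoff; auto].
Qed.

(** * The smoothed staircase *)

Section Staircase.

Variable xs : nat -> R.

Definition ramp (l : nat) (y : R) : R :=
  xs l + (xs (S l) - xs l) * smooth_step ((y - (INR l + 1/20)) / (9/10)).

(* [Z.to_nat] sends negative floors to [0], so [staircase] equals [xs 0] for all [y < 1/20]. *)
Definition staircase (y : R) : R := ramp (Z.to_nat (Zfloor y)) y.

Lemma ramp_left l y : y <= INR l + 1/20 -> ramp l y = xs l.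
Proof. intros Hy. unfold ramp. rewrite smooth_step_le0; [ring|]. unfold Rdiv. nra. Qed.

Lemma ramp_right l y : INR l + 19/20 <= y -> ramp l y = xs (S l).
Proof.
  intros Hy. unfold ramp. rewrite smooth_step_ge1; [ring|].
  apply Rmult_le_reg_r with (9/10); [lra|]. unfold Rdiv. rewrite Rmult_assoc, Rinv_l; lra.
Qed.

Lemma Zfloor_to_nat l y : INR l <= y < INR l + 1 -> Z.to_nat (Zfloor y) = l.
Proof.
  intros Hy. rewrite (Zfloor_eq (Z.of_nat l)); [apply Nat2Z.id | now rewrite <- INR_IZR_INZ].
Qed.

Lemma staircase_eq_ramp l y :
  (INR l - 1/20 < y \/ l = 0%nat) -> y < INR l + 1 -> staircase y = ramp l y.
Proof.
  intros Hlo Hhi. unfold staircase. pose proof (pos_INR l).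
  destruct (Rlt_or_le y 0) as [Hneg|Hy0].
  - assert (Hl : l = 0%nat).
    { destruct Hlo as [Hlo|]; [|auto]. destruct l as [|l]; [auto|].
      rewrite S_INR in Hlo. pose proof (pos_INR l). lra. }
    subst l. replace (Z.to_nat (Zfloor y)) with 0%nat; [reflexivity|].
    assert (Zfloor y < 0)%Z by (apply lt_IZR; pose proof (Zfloor_bound y); simpl; lra). lia.
  - destruct (Rle_or_lt (INR l) y) as [Hl|Hl]; [rewrite (Zfloor_to_nat l y); auto; lra|].
    destruct l as [|l]; [simpl in Hl; lra|]. rewrite S_INR in *.
    destruct Hlo as [Hlo|]; [|discriminate].
    rewrite (Zfloor_to_nat l y), ramp_right, ramp_left by (rewrite ?S_INR; lra). reflexivity.
Qed.

Lemma staircase_locally_ramp t : exists l, locally t (fun y => ramp l y = staircase y).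
Proof.
  destruct (Rlt_or_le t 0) as [Hn|Ht].
  - exists 0%nat. apply (filter_imp (fun y => y < 0)); [|exact (open_lt 0 t Hn)].
    intros y Hy. symmetry. apply staircase_eq_ramp; [auto | simpl; lra].
  - set (l := Z.to_nat (Zfloor t)). exists l.
    assert (Hl : INR l <= t < INR l + 1).
    { pose proof (Zfloor_bound t).
      assert (0 <= Zfloor t)%Z by (apply Zfloor_lub; simpl; lra).
      unfold l. rewrite INR_IZR_INZ, Z2Nat.id by auto. lra. }
    apply (filter_imp (fun y => INR l - 1/20 < y /\ y < INR l + 1)).
    + intros y Hy. symmetry. apply staircase_eq_ramp; tauto.
    + apply (open_and _ _ (open_gt _) (open_lt _)). lra.
Qed.

Lemma ramp_Cn n l : Cn n (ramp l).
Proof.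
  apply Cn_plus; [apply Cn_const|]. apply Cn_mult; [apply Cn_const|].
  apply Cn_comp; [apply smooth_step_Cn|].
  apply Cn_ext with (fun y => 10/9 * y + - (INR l + 1/20) * (10/9));
    [intro; field | apply Cn_affine].
Qed.

Lemma staircase_Cn n : Cn n staircase.
Proof.
  apply Cn_loc. intro x. destruct (staircase_locally_ramp x) as [l Hl].
  exists (ramp l). split; [apply ramp_Cn | exact Hl].
Qed.

Lemma ramp_derive l y :
  Derive (ramp l) y
  = (xs (S l) - xs l) * (10/9) * Derive smooth_step ((y - (INR l + 1/20)) / (9/10)).
Proof.
  apply is_derive_unique. unfold ramp. auto_derive; [apply smooth_step_ex_derive|].
  change (fun x : R => smooth_step x) with smooth_step. unfold Rminus, Rdiv. field.
Qed.

Lemma ramp_derive2 l y :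
  Derive_n (ramp l) 2 y
  = (xs (S l) - xs l) * (10/9) ^ 2 * Derive_n smooth_step 2 ((y - (INR l + 1/20)) / (9/10)).
Proof.
  change (Derive_n (ramp l) 2 y) with (Derive (Derive (ramp l)) y).
  rewrite (Derive_ext _ _ y (ramp_derive l)).
  apply is_derive_unique. auto_derive; [apply smooth_step_ex_derive2|].
  change (fun x : R => Derive smooth_step x) with (Derive smooth_step).
  change (Derive_n smooth_step 2) with (Derive (Derive smooth_step)).
  unfold Rminus, Rdiv. field.
Qed.

Lemma staircase_derive_bounds t :
  (forall l, Rabs (xs (S l) - xs l) <= 1/2) ->
  Rabs (Derive staircase t) <= 13 /\ Rabs (Derive_n staircase 2 t) < 15.
Proof.
  intros Hstep. destruct (staircase_locally_ramp t) as [l Hl].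
  rewrite <- (Derive_ext_loc _ _ t Hl), <- (Derive_n_ext_loc _ _ 2 t Hl).
  rewrite ramp_derive, ramp_derive2, !Rabs_mult, (Rabs_right (10/9)), (Rabs_right ((10/9) ^ 2))
    by lra.
  destruct (smooth_step_derive_bounds ((t - (INR l + 1/20)) / (9/10))) as [B1 B2].
  specialize (Hstep l). pose proof (Rabs_pos (xs (S l) - xs l)).
  split; nra.
Qed.

Lemma staircase_range a b : (forall l, a <= xs l <= b) -> forall t, a <= staircase t <= b.
Proof.
  intros Hab t. unfold staircase, ramp. set (l := Z.to_nat (Zfloor t)).
  pose proof (smooth_step_range ((t - (INR l + 1/20)) / (9/10))).
  pose proof (Hab l). pose proof (Hab (S l)). nra.
Qed.

Lemma staircase_flat l y : INR l - 1/20 < y <= INR l + 1/20 -> staircase y = xs l.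
Proof. intros Hy. rewrite (staircase_eq_ramp l y) by lra. apply ramp_left. lra. Qed.

End Staircase.

(** * Curves that are graphs over the y-axis *)

Lemma Derive_n_id_2 t : Derive_n (fun t => t) 2 t = 0.
Proof.
  change (Derive (Derive (fun t => t)) t = 0).
  rewrite (Derive_ext _ (fun _ => 1)); [apply Derive_const | intro; apply Derive_id].
Qed.

Lemma graph_properly_embedded g : smooth g -> properly_embedded_curve g (fun t => t).
Proof.
  intros Hg. repeat split.
  - exact Hg.
  - intros n t. exact (Cn_id n n t (le_n n)).
  - intro t. right. rewrite Derive_id. lra.
  - intros t1 t2 _ E. exact E.
  - intros B. exists B. intros t Ht. eapply Rlt_le_trans; [exact Ht|].
    rewrite <- sqrt_Rsqr_abs. apply sqrt_le_1_alt. unfold Rsqr.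
    pose proof (pow2_ge_0 (g t)). simpl. lra.
Qed.

Lemma graph_speed_ge1 g t : 1 <= speed g (fun t => t) t.
Proof.
  unfold speed. rewrite Derive_id, <- sqrt_1 at 1. apply sqrt_le_1_alt.
  pose proof (pow2_ge_0 (Derive g t)). nra.
Qed.

Lemma graph_unit_tangent_y_ge g B :
  (forall t, Rabs (Derive g t) <= B) ->
  forall t, / (B + 1) <= Rabs (unit_tangent_y g (fun t => t) t).
Proof.
  intros HB t. pose proof (graph_speed_ge1 g t) as Hs1.
  unfold unit_tangent_y. rewrite Derive_id.
  assert (Hs : speed g (fun t => t) t <= B + 1).
  { specialize (HB t). pose proof (Rabs_pos (Derive g t)).
    unfold speed. rewrite Derive_id, <- (sqrt_pow2 (B + 1)) by lra.
    apply sqrt_le_1_alt. rewrite <- (pow2_abs (Derive g t)). nra. }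
  unfold Rdiv. rewrite Rmult_1_l, Rabs_right by (apply Rle_ge, Rlt_le, Rinv_0_lt_compat; lra).
  apply Rinv_le_contravar; lra.
Qed.

Lemma graph_curvature_le g t :
  Rabs (curvature g (fun t => t) t) <= Rabs (Derive_n g 2 t).
Proof.
  pose proof (graph_speed_ge1 g t) as Hs. unfold curvature.
  rewrite Derive_id, Derive_n_id_2. set (S := speed g (fun t => t) t) in *.
  assert (HS3 : 1 <= S ^ 3) by (rewrite <- (pow1 3); apply pow_incr; lra).
  replace ((Derive g t * 0 - 1 * Derive_n g 2 t) / S ^ 3) with (- Derive_n g 2 t / S ^ 3)
    by (field; lra).
  unfold Rdiv. rewrite Rabs_mult, Rabs_Ropp, (Rabs_right (/ S ^ 3))
    by (apply Rle_ge, Rlt_le, Rinv_0_lt_compat; lra).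
  assert (/ S ^ 3 <= 1) by (rewrite <- Rinv_1; apply Rinv_le_contravar; lra).
  pose proof (Rabs_pos (Derive_n g 2 t)). nra.
Qed.

Lemma step_state_range M (HM : TM_wf M) cfg :
  (1 <= fst (fst cfg) <= tm_m M)%nat -> (1 <= fst (fst (step M cfg)) <= tm_m M)%nat.
Proof.
  destruct cfg as [[q r] s]. intros Hq. simpl in Hq. unfold step.
  destruct (Nat.eqb q (tm_qh M)); [exact Hq|].
  destruct HM as [_ [_ Hdelta]].
  specialize (Hdelta q (r mod 10)%nat Hq (Nat.mod_upper_bound r 10 ltac:(lia))).
  destruct (tm_delta M q (r mod 10)) as [[q' w] []]; exact (proj1 Hdelta).
Qed.

Lemma Delta_iter_state_range M (HM : TM_wf M) l cfg :
  (1 <= fst (fst cfg) <= tm_m M)%nat -> (1 <= fst (fst (Delta_iter M l cfg)) <= tm_m M)%nat.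
Proof.
  intros Hq. induction l as [|l IH]; [exact Hq|].
  apply (step_state_range M HM (Delta_iter M l cfg) IH).
Qed.

Lemma enc_range cfg : (1 <= fst (fst cfg))%nat -> 0 < enc cfg <= 1/2.
Proof.
  destruct cfg as [[q r] s]. simpl. intros Hq. unfold enc.
  assert (H2 : 2 <= 2 ^ q).
  { destruct q as [|q]; [lia|]. simpl. pose proof (pow_R1_Rle 2 q ltac:(lra)). lra. }
  pose proof (pow_R1_Rle 3 r ltac:(lra)). pose proof (pow_R1_Rle 5 s ltac:(lra)).
  assert (Hp : 2 <= 2 ^ q * 3 ^ r * 5 ^ s) by (assert (2 <= 2 ^ q * 3 ^ r) by nra; nra).
  split; [apply Rinv_0_lt_compat; lra|].
  replace (1/2) with (/ 2) by field. apply Rinv_le_contravar; lra.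
Qed.

Theorem mainTheorem4 (M : TM) (HM : TM_wf M) (c : nat -> nat * nat)
  (Hc : init_enum M c) :
  exists eps0 : R, 0 < eps0 /\
  forall eps : R, 0 < eps < eps0 ->
  forall i : nat,
  exists gx gy : R -> R,
    properly_embedded_curve gx gy /\
    (forall t, 2 * INR i <= gx t <= 2 * INR i + 1) /\
    (exists d, 0 < d /\ forall t, d <= Rabs (unit_tangent_y gx gy t)) /\
    (forall l : nat, exists t,
        gx t = enc (Delta_iter M l (init_cfg M (c i))) + 2 * INR i /\ gy t = INR l) /\
    (forall t, Rabs (curvature gx gy t) < 15) /\
    (forall l : nat, exists a b, a < b /\
        forall x y,
          (exists t, a < t < b /\ gx t = x /\ gy t = y) <->
          (x = enc (Delta_iter M l (init_cfg M (c i))) + 2 * INR i /\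
           INR l - eps < y < INR l + eps)).
Proof.
  exists (1/20). split; [lra|]. intros eps Heps i.
  set (xs l := enc (Delta_iter M l (init_cfg M (c i))) + 2 * INR i).
  assert (Hxs : forall l, 2 * INR i < xs l <= 2 * INR i + 1/2).
  { intro l. pose proof (proj1 HM) as Hq0.
    pose proof (enc_range _ (proj1 (Delta_iter_state_range M HM l (init_cfg M (c i)) Hq0))).
    unfold xs. lra. }
  assert (Hstep : forall l, Rabs (xs (S l) - xs l) <= 1/2)
    by (intro l; pose proof (Hxs l); pose proof (Hxs (S l)); apply Rabs_le; lra).
  exists (staircase xs), (fun t => t). split; [|split; [|split; [|split; [|split]]]].
  - apply graph_properly_embedded. intros n t. exact (staircase_Cn xs n n t (le_n n)).
  - apply staircase_range. intro l. pose proof (Hxs l). lra.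
  - exists (/ (13 + 1)). split; [lra|].
    apply graph_unit_tangent_y_ge. intro t. apply (staircase_derive_bounds xs t Hstep).
  - intro l. exists (INR l). split; [apply (staircase_flat xs l); lra | reflexivity].
  - intro t. eapply Rle_lt_trans; [apply graph_curvature_le|].
    apply (staircase_derive_bounds xs t Hstep).
  - intro l. exists (INR l - eps), (INR l + eps). split; [lra|]. intros x y. split.
    + intros [t [Ht [<- <-]]]. split; [apply (staircase_flat xs l)|]; lra.
    + intros [-> Hy]. exists y. split; [lra|].
      split; [apply (staircase_flat xs l); lra | reflexivity].
Qed.
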